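(* Let $H_3$ be the simply connected 3-dimensional Heisenberg group, realized as $\mathbb{R}^3$ with coordinates $(x,y,z)$ and group law $(a,b,c)\cdot(x,y,z)=(a+x,\,b+y,\,c+z-ay)$, so that $F_1=\partial_z$, $F_2=\partial_y-x\partial_z$, $F_3=\partial_x$ are left-invariant with the only nonzero bracket $[F_2,F_3]=F_1$. Consider the left-invariant Lorentzian metrics $g_1=-dx^2+dy^2+(x\,dy+dz)^2$ and $g_2=dx^2+dy^2-(x\,dy+dz)^2$ (so $g_1$ makes $F_1,F_2,F_3$ orthonormal with $F_3$ timelike, and $g_2$ makes them orthonormal with $F_1$ timelike). Then $g_1$ and $g_2$ are nilsolitons, and each of $(\mathfrak{h}_3,g_1)$, $(\mathfrak{h}_3,g_2)$ admits a metric solvable extension which is an Einstein metric.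
   Context: For a simply connected Lie group $G$ with Lie algebra $\mathfrak{g}$ and left-invariant pseudo-Riemannian metric $g$, $g$ is an algebraic Ricci soliton if $\mathrm{ric}=c\,\mathrm{Id}+D$ for some $c\in\mathbb{R}$ and some derivation $D$ of $\mathfrak{g}$, where $\mathrm{ric}$ is the Ricci operator ($g(\mathrm{ric}X,Y)=\mathrm{Ric}(X,Y)$); it is a nilsoliton if $G$ is nilpotent. A metric solvable extension of $(\mathfrak{n},g)$ is a solvable Lie algebra $\mathfrak{s}=\mathfrak{a}\oplus\mathfrak{n}$ (as vector spaces) with bracket $[\cdot,\cdot]'$ and a pseudo-Riemannian inner product $\tilde g$ such that $[\mathfrak{s},\mathfrak{s}]'=\mathfrak{n}=\mathfrak{a}^{\perp}$, $[X,Y]'=[X,Y]$ and $\tilde g(X,Y)=g(X,Y)$ for all $X,Y\in\mathfrak{n}$. It is Einstein if the corresponding left-invariant metric satisfies $\mathrm{Ric}(\tilde g)=\kappa\tilde g$ for a constant $\kappa$. $\mathfrak{h}_3$ denotes the Lie algebra of $H_3$. *)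

(* Left-invariant pseudo-Riemannian geometry of a Lie group,
   encoded (as usual) at the level of its Lie algebra: a real Lie algebra of
   dimension n given by structure constants in a basis e_0..e_(n-1), vectors
   are row vectors 'rV[R]_n, a pseudo-Riemannian inner product is a
   symmetric invertible Gram matrix G. *)
From HB Require Import structures.
From mathcomp Require Import all_boot all_order all_algebra.
Set Implicit Arguments. Unset Strict Implicit. Unset Printing Implicit Defensive.
Import Order.TTheory GRing.Theory Num.Theory.
Local Open Scope ring_scope.

Section LieMetric.
Variable R : rcfType.
Variable n : nat.
(* cst i j k = k-th coordinate of [e_i, e_j] *)
Variable cst : 'I_n -> 'I_n -> 'I_n -> R.
Variable G : 'M[R]_n.

Definition ebasis (k : 'I_n) : 'rV[R]_n := delta_mx 0 k.

Definition br (u v : 'rV[R]_n) : 'rV[R]_n :=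
  \sum_(i < n) \sum_(j < n) (u 0 i * v 0 j) *: \row_(k < n) cst i j k.

Definition ip (u v : 'rV[R]_n) : R := (u *m G *m v^T) 0 0.

Definition is_lie : Prop :=
  (forall u v, br u v = - br v u) /\
  (forall u v w, br (br u v) w + br (br v w) u + br (br w u) v = 0).

Definition pseudo_metric : Prop := G^T = G /\ G \in unitmx.

(* Levi-Civita connection on left-invariant fields (Koszul formula):
   2 g(nabla_u v, w) = g([u,v],w) - g([v,w],u) + g([w,u],v). *)
Definition nabla (u v : 'rV[R]_n) : 'rV[R]_n :=
  (2%:R^-1) *: (\row_(k < n) (ip (br u v) (ebasis k) - ip (br v (ebasis k)) u
                               + ip (br (ebasis k) u) v)) *m invmx G.

Definition curv (u v w : 'rV[R]_n) : 'rV[R]_n :=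
  nabla u (nabla v w) - nabla v (nabla u w) - nabla (br u v) w.

Definition Ric (u v : 'rV[R]_n) : R := \sum_(k < n) (curv (ebasis k) u v) 0 k.

Definition RicM : 'M[R]_n := \matrix_(i < n, j < n) Ric (ebasis i) (ebasis j).

(* Ricci operator ric, acting on row vectors by u |-> u *m ricop, so that
   g(ric u, v) = Ric(u, v). *)
Definition ricop : 'M[R]_n := RicM *m invmx G.

Definition derivation (D : 'M[R]_n) : Prop :=
  forall u v, br u v *m D = br (u *m D) v + br u (v *m D).

Definition alg_ricci_soliton : Prop :=
  exists (c : R) (D : 'M[R]_n), derivation D /\ ricop = c%:M + D.

(* subspaces as row spaces of square matrices *)
Definition derived_sub (W : 'M[R]_n) : 'M[R]_n :=
  (\sum_(i < n) \sum_(j < n) <<br (row i W) (row j W)>>)%MS.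
Definition lcs_step (W : 'M[R]_n) : 'M[R]_n :=
  (\sum_(i < n) \sum_(j < n) <<br (ebasis i) (row j W)>>)%MS.

Definition solvable_lie : Prop :=
  exists k : nat, \rank (iter k derived_sub 1%:M) = 0%N.
Definition nilpotent_lie : Prop :=
  exists k : nat, \rank (iter k lcs_step 1%:M) = 0%N.

Definition nilsoliton : Prop :=
  is_lie /\ pseudo_metric /\ nilpotent_lie /\ alg_ricci_soliton.

Definition einstein : Prop := exists kappa : R, RicM = kappa *: G.

End LieMetric.

(* Metric solvable extension s = a (+) n, with a spanned by the first m basis
   vectors and n by the last n basis vectors (embedded by v |-> row_mx 0 v). *)
Definition metric_solv_ext (R : rcfType) (n : nat)
    (cst : 'I_n -> 'I_n -> 'I_n -> R) (G : 'M[R]_n)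
    (m : nat) (cs : 'I_(m + n) -> 'I_(m + n) -> 'I_(m + n) -> R)
    (Gs : 'M[R]_(m + n)) : Prop :=
  is_lie cs /\ pseudo_metric Gs /\ solvable_lie cs /\
  (forall u v : 'rV[R]_n,
      br cs (row_mx 0 u) (row_mx 0 v) = row_mx 0 (br cst u v)) /\
  (forall u v : 'rV[R]_n, ip Gs (row_mx 0 u) (row_mx 0 v) = ip G u v) /\
  (derived_sub cs 1%:M == row_mx (0 : 'M[R]_(n, m)) (1%:M : 'M[R]_n))%MS /\
  (forall v : 'rV[R]_(m + n),
      (forall u : 'rV[R]_m, ip Gs (row_mx u 0) v = 0) <->
      exists w : 'rV[R]_n, v = row_mx 0 w).

(* Heisenberg algebra h3, basis F1,F2,F3 = indices 0,1,2, [F2,F3] = F1 *)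
Definition h3 (R : rcfType) (i j k : 'I_3) : R :=
  if [&& nat_of_ord i == 1%N, nat_of_ord j == 2%N & nat_of_ord k == 0%N] then 1
  else if [&& nat_of_ord i == 2%N, nat_of_ord j == 1%N & nat_of_ord k == 0%N]
  then -1 else 0.

Definition diag3 (R : rcfType) (a b c : R) : 'M[R]_3 :=
  \matrix_(i < 3, j < 3)
    (if i == j then (if nat_of_ord i == 0%N then a
                     else if nat_of_ord i == 1%N then b else c) else 0).

(* g1 = -dx^2 + dy^2 + (x dy + dz)^2 : F1,F2,F3 orthonormal, F3 timelike *)
Definition g1 (R : rcfType) : 'M[R]_3 := diag3 1 1 (-1).
(* g2 = dx^2 + dy^2 - (x dy + dz)^2 : F1,F2,F3 orthonormal, F1 timelike *)
Definition g2 (R : rcfType) : 'M[R]_3 := diag3 (-1) 1 1.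

From HB Require Import structures.
From mathcomp Require Import all_boot all_order all_algebra.
From mathcomp Require Import ring.
Import Order.TTheory GRing.Theory Num.Theory.
Set Implicit Arguments. Unset Strict Implicit. Unset Printing Implicit Defensive.
Local Open Scope ring_scope.

(* In the orthonormal frame [F1, F2, F3] the Levi-Civita connection is given by the
   Koszul formula, and for both [g1] and [g2] the Ricci operator of [h3] comes out as
   [diag(-1/2, 1/2, 1/2) = 3/2 Id + D] with [D = diag(-2, -1, -1)], a derivation of
   [h3] (every [diag(b + c, b, c)] is one).  For the extensions take the semidirect
   product [s = R A ⋉ h3] with [ad A = -D/2 = diag(1, 1/2, 1/2)]: the Jacobi identity
   of [s] is exactly the derivation property of [ad A], [[s, s] = h3] because [ad A] is
   invertible, [s] is solvable since [h3] is nilpotent, and declaring [A] a unit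
   timelike vector orthogonal to [h3] gives [Ric = 3/2 g] by a direct computation. *)

Lemma sum_mul_delta (R : comNzRingType) n (F : 'I_n -> R) k :
  \sum_i F i * (i == k)%:R = F k.
Proof.
rewrite (bigD1 k) //= eqxx mulr1 big1 ?addr0 // => i /negbTE ->.
by rewrite mulr0.
Qed.

Section Bracket.
Variables (R : rcfType) (n : nat) (cst : 'I_n -> 'I_n -> 'I_n -> R).
Local Notation vec := 'rV[R]_n.

Lemma ebasisE (k l : 'I_n) : ebasis R k 0 l = (l == k)%:R.
Proof. by rewrite mxE eqxx. Qed.

Lemma brE (u v : vec) k : br cst u v 0 k = \sum_i \sum_j u 0 i * v 0 j * cst i j k.
Proof.
rewrite summxE; apply: eq_bigr => i _; rewrite summxE.
by apply: eq_bigr => j _; rewrite !mxE.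
Qed.

Lemma brDl (u u' v : vec) : br cst (u + u') v = br cst u v + br cst u' v.
Proof.
rewrite -big_split; apply: eq_bigr => i _; rewrite -big_split.
by apply: eq_bigr => j _; rewrite mxE mulrDl scalerDl.
Qed.

Lemma brZl a (u v : vec) : br cst (a *: u) v = a *: br cst u v.
Proof.
rewrite scaler_sumr; apply: eq_bigr => i _; rewrite scaler_sumr.
by apply: eq_bigr => j _; rewrite mxE scalerA mulrA.
Qed.

Lemma brNl (u v : vec) : br cst (- u) v = - br cst u v.
Proof. by rewrite -scaleN1r brZl scaleN1r. Qed.

Lemma brDr (u v v' : vec) : br cst u (v + v') = br cst u v + br cst u v'.
Proof.
rewrite -big_split; apply: eq_bigr => i _; rewrite -big_split.
by apply: eq_bigr => j _; rewrite mxE mulrDr scalerDl.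
Qed.

Lemma brZr a (u v : vec) : br cst u (a *: v) = a *: br cst u v.
Proof.
rewrite scaler_sumr; apply: eq_bigr => i _; rewrite scaler_sumr.
by apply: eq_bigr => j _; rewrite mxE scalerA mulrCA.
Qed.

Lemma br0l (v : vec) : br cst 0 v = 0.
Proof. by move: (brZl 0 0 v); rewrite !scale0r. Qed.

Lemma br0r (u : vec) : br cst u 0 = 0.
Proof. by move: (brZr 0 u 0); rewrite !scale0r. Qed.

Lemma br_ebasis i j : br cst (ebasis R i) (ebasis R j) = \row_k cst i j k.
Proof.
apply/rowP => k; rewrite brE mxE -(sum_mul_delta (fun i' => cst i' j k)).
apply: eq_bigr => i' _.
rewrite -(sum_mul_delta (fun j' => cst i' j' k * (i' == i)%:R) j).
by apply: eq_bigr => j' _; rewrite !ebasisE; ring.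
Qed.

Lemma br_ebasisl l (v : vec) m :
  br cst (ebasis R l) v 0 m = \sum_j v 0 j * cst l j m.
Proof.
rewrite brE exchange_big; apply: eq_bigr => j _ /=.
rewrite -(sum_mul_delta (fun i => v 0 j * cst i j m) l).
by apply: eq_bigr => i _; rewrite ebasisE; ring.
Qed.

Lemma br_ebasisr (u : vec) l m :
  br cst u (ebasis R l) 0 m = \sum_i u 0 i * cst i l m.
Proof.
rewrite brE; apply: eq_bigr => i _.
rewrite -(sum_mul_delta (fun j => u 0 i * cst i j m) l).
by apply: eq_bigr => j _; rewrite ebasisE; ring.
Qed.

Lemma br_bilinear (f : 'rV[R]_n -> 'rV[R]_n -> 'rV[R]_n) :
    (forall u u' v, f (u + u') v = f u v + f u' v) ->
    (forall a u v, f (a *: u) v = a *: f u v) ->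
    (forall u v v', f u (v + v') = f u v + f u v') ->
    (forall a u v, f u (a *: v) = a *: f u v) ->
  forall u v, br (fun i j k => f (ebasis R i) (ebasis R j) 0 k) u v = f u v.
Proof.
move=> fDl fZl fDr fZr u v.
have f0l w : f 0 w = 0 by move: (fZl 0 0 w); rewrite !scale0r.
have f0r w : f w 0 = 0 by move: (fZr 0 w 0); rewrite !scale0r.
rewrite {2}(row_sum_delta u) (big_morph (f^~ v) (fun x y => fDl x y v) (f0l v)).
apply: eq_bigr => i _; rewrite fZl {2}(row_sum_delta v).
rewrite (big_morph (f _) (fDr _) (f0r _)) scaler_sumr.
apply: eq_bigr => j _; rewrite fZr scalerA; congr (_ *: _).
by apply/rowP => k; rewrite mxE.
Qed.

Lemma br_sub_derived (u v : vec) : (br cst u v <= derived_sub cst 1%:M)%MS.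
Proof.
apply: summx_sub => i _; apply: summx_sub => j _; apply: scalemx_sub.
apply: (sumsmx_sup i) => //; apply: (sumsmx_sup j) => //.
by rewrite genmxE !row1 -br_ebasis.
Qed.

Lemma lcs_step_sub p q (W : 'M[R]_n) (P : 'M[R]_(p, n)) (Q : 'M[R]_(q, n)) :
    (W <= P)%MS -> (forall u v, (v <= P)%MS -> (br cst u v <= Q)%MS) ->
  (lcs_step cst W <= Q)%MS.
Proof.
move=> sWP sbrQ; apply/sumsmx_subP => i _; apply/sumsmx_subP => j _.
by rewrite genmxE sbrQ // (submx_trans (row_sub j W)).
Qed.

Lemma derived_sub_sub p q (W : 'M[R]_n) (P : 'M[R]_(p, n)) (Q : 'M[R]_(q, n)) :
    (W <= P)%MS ->
    (forall u v, (u <= P)%MS -> (v <= P)%MS -> (br cst u v <= Q)%MS) ->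
  (derived_sub cst W <= Q)%MS.
Proof.
move=> sWP sbrQ; apply/sumsmx_subP => i _; apply/sumsmx_subP => j _.
by rewrite genmxE sbrQ // (submx_trans (row_sub _ W)).
Qed.

End Bracket.

Lemma curv_entry (R : rcfType) n (cst : 'I_n -> 'I_n -> 'I_n -> R) (G : 'M[R]_n) u v w k :
  curv cst G u v w 0 k = nabla cst G u (nabla cst G v w) 0 k
     - nabla cst G v (nabla cst G u w) 0 k - nabla cst G (br cst u v) w 0 k.
Proof.
(* Generalizing the three terms keeps [mxE] from unfolding [nabla]. *)
rewrite /curv; move: (nabla cst G u (nabla cst G v w)) (nabla cst G v (nabla cst G u w)).
move: (nabla cst G (br cst u v) w) => c a b.
by rewrite !mxE.
Qed.

Section OrthonormalFrame.
Variables (R : rcfType) (n : nat) (cst : 'I_n -> 'I_n -> 'I_n -> R) (s : 'rV[R]_n).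
Hypothesis s_sign : forall i, s 0 i ^+ 2 = 1.
Local Notation G := (diag_mx s).

Lemma ip_diag (u v : 'rV[R]_n) : ip G u v = \sum_i u 0 i * s 0 i * v 0 i.
Proof. by rewrite /ip mxE; apply: eq_bigr => i _; rewrite mul_mx_diag !mxE. Qed.

Lemma diag_sign_sqr : G *m G = 1%:M.
Proof.
rewrite mulmx_diag -diag_const_mx; congr diag_mx.
by apply/rowP => i; rewrite !mxE -expr2 s_sign.
Qed.

Lemma diag_sign_unit : G \in unitmx.
Proof. by case: (mulmx1_unit diag_sign_sqr). Qed.

Lemma invmx_diag_sign : invmx G = G.
Proof. by rewrite -[LHS]mulmx1 -diag_sign_sqr mulKmx ?diag_sign_unit. Qed.

Lemma pseudo_metric_diag_sign : pseudo_metric G.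
Proof. by split; [exact: tr_diag_mx | exact: diag_sign_unit]. Qed.

(* [christoffel i j l] is the [l]-th coordinate of [nabla_(e_i) e_j]. *)
Definition christoffel (i j l : 'I_n) : R :=
  2^-1 * (cst i j l * s 0 l - cst j l i * s 0 i + cst l i j * s 0 j) * s 0 l.

Lemma nablaE (u v : 'rV[R]_n) l :
  nabla cst G u v 0 l = \sum_i \sum_j u 0 i * v 0 j * christoffel i j l.
Proof.
rewrite /nabla invmx_diag_sign mul_mx_diag !mxE.
have -> : ip G (br cst u v) (ebasis R l) =
    \sum_i \sum_j u 0 i * v 0 j * (cst i j l * s 0 l).
  rewrite ip_diag; under eq_bigr do rewrite ebasisE.
  rewrite sum_mul_delta brE mulr_suml; apply: eq_bigr => i _.
  by rewrite mulr_suml; apply: eq_bigr => j _; rewrite mulrA.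
have -> : ip G (br cst v (ebasis R l)) u =
    \sum_i \sum_j u 0 i * v 0 j * (cst j l i * s 0 i).
  rewrite ip_diag; apply: eq_bigr => i _.
  by rewrite br_ebasisr !mulr_suml; apply: eq_bigr => j _; ring.
have -> : ip G (br cst (ebasis R l) u) v =
    \sum_i \sum_j u 0 i * v 0 j * (cst l i j * s 0 j).
  rewrite ip_diag exchange_big; apply: eq_bigr => j _ /=.
  by rewrite br_ebasisl !mulr_suml; apply: eq_bigr => i _; ring.
rewrite -sumrB -big_split mulr_sumr mulr_suml; apply: eq_bigr => i _ /=.
rewrite -sumrB -big_split mulr_sumr mulr_suml; apply: eq_bigr => j _ /=.
by rewrite /christoffel; ring.
Qed.

Lemma nabla_ebasisl a (w : 'rV[R]_n) l :
  nabla cst G (ebasis R a) w 0 l = \sum_b w 0 b * christoffel a b l.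
Proof.
rewrite nablaE -(sum_mul_delta (fun i => \sum_b w 0 b * christoffel i b l) a).
apply: eq_bigr => i _; rewrite mulr_suml; apply: eq_bigr => j _.
by rewrite ebasisE; ring.
Qed.

Lemma nabla_ebasisr (x : 'rV[R]_n) c l :
  nabla cst G x (ebasis R c) 0 l = \sum_a x 0 a * christoffel a c l.
Proof.
rewrite nablaE; apply: eq_bigr => i _.
rewrite -(sum_mul_delta (fun j => x 0 i * christoffel i j l) c).
by apply: eq_bigr => j _; rewrite ebasisE; ring.
Qed.

Lemma nabla_ebasis a c l :
  nabla cst G (ebasis R a) (ebasis R c) 0 l = christoffel a c l.
Proof.
rewrite nabla_ebasisr -(sum_mul_delta (fun i => christoffel i c l) a).
by apply: eq_bigr => i _; rewrite ebasisE mulrC.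
Qed.

Lemma RicM_diag i j :
  RicM cst G i j = \sum_k \sum_b
    (christoffel i j b * christoffel k b k - christoffel k j b * christoffel i b k
     - cst k i b * christoffel b j k).
Proof.
rewrite mxE; apply: eq_bigr => k _; rewrite curv_entry !sumrB.
congr (_ - _ - _).
- by rewrite nabla_ebasisl; apply: eq_bigr => b _; rewrite nabla_ebasis.
- by rewrite nabla_ebasisl; apply: eq_bigr => b _; rewrite nabla_ebasis.
- by rewrite nabla_ebasisr; apply: eq_bigr => b _; rewrite br_ebasis mxE.
Qed.

Lemma ricop_diag i j : ricop cst G i j = RicM cst G i j * s 0 j.
Proof. by rewrite /ricop invmx_diag_sign mul_mx_diag mxE. Qed.

End OrthonormalFrame.

Section BlockMetric.
Variables (R : rcfType) (m n : nat) (r : 'rV[R]_m) (s : 'rV[R]_n).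

Lemma ip_diag_row_mx (a b : 'rV[R]_m) (u v : 'rV[R]_n) :
  ip (diag_mx (row_mx r s)) (row_mx a u) (row_mx b v) =
  ip (diag_mx r) a b + ip (diag_mx s) u v.
Proof.
rewrite /ip diag_mx_row mul_row_block !mulmx0 addr0 add0r tr_row_mx mul_row_col.
by rewrite mxE.
Qed.

Lemma ip_diag_row_mx_perp (v : 'rV[R]_(m + n)) : (forall i, r 0 i != 0) ->
  (forall u : 'rV[R]_m, ip (diag_mx (row_mx r s)) (row_mx u 0) v = 0) <->
  exists w, v = row_mx 0 w.
Proof.
move=> r_nz; rewrite -(hsubmxK v); move: (lsubmx v) (rsubmx v) => x w.
have ip0 (u : 'rV[R]_m) : ip (diag_mx (row_mx r s)) (row_mx u 0) (row_mx x w) =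
    \sum_i u 0 i * r 0 i * x 0 i.
  by rewrite ip_diag_row_mx !ip_diag [X in _ + X]big1 ?addr0 // => i _; rewrite mxE !mul0r.
split => [x_perp | [w' /eq_row_mx [x0 _]] u]; last first.
  by rewrite ip0 x0 big1 // => i _; rewrite mxE mulr0.
exists w; congr row_mx; apply/rowP => i; move: (x_perp (delta_mx 0 i)).
rewrite ip0 (bigD1 i) //= big1 => [|j /negbTE nji]; last by rewrite mxE nji !mul0r.
rewrite !mxE !eqxx mul1r addr0 => /eqP; rewrite mulf_eq0 (negbTE (r_nz i)) /=.
by move/eqP.
Qed.

End BlockMetric.

Lemma ebasis_lshift (R : rcfType) m n (i : 'I_m) :
  ebasis R (lshift n i) = row_mx (ebasis R i) 0.
Proof.
apply/rowP => k; case: (split_ordP k) => k' ->.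
  by rewrite row_mxEl !ebasisE eq_shift.
by rewrite row_mxEr ebasisE eq_shift mxE.
Qed.

Lemma ebasis_rshift (R : rcfType) m n (j : 'I_n) :
  ebasis R (rshift m j) = row_mx 0 (ebasis R j).
Proof.
apply/rowP => k; case: (split_ordP k) => k' ->.
  by rewrite row_mxEl ebasisE eq_shift mxE.
by rewrite row_mxEr !ebasisE eq_shift.
Qed.

Lemma row_mx0_sub (R : rcfType) m n k (w : 'rV[R]_n) (W : 'M[R]_(k, n)) :
  (w <= W)%MS -> (row_mx (0 : 'rV[R]_m) w <= row_mx (0 : 'M[R]_(k, m)) W)%MS.
Proof.
case/submxP => x ->; have -> : row_mx 0 (x *m W) = x *m row_mx (0 : 'M_(k, m)) W.
  by rewrite mul_mx_row mulmx0.
exact: submxMl.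
Qed.

Lemma sub_row_mx0 (R : rcfType) m n k (v : 'rV[R]_(m + n)) (W : 'M[R]_(k, n)) :
  (v <= row_mx 0 W)%MS -> exists2 w, (w <= W)%MS & v = row_mx 0 w.
Proof.
case/submxP => x ->; exists (x *m W); first exact: submxMl.
by rewrite mul_mx_row mulmx0.
Qed.

Lemma sub_ebasis_eq0 (R : rcfType) n (w : 'rV[R]_n) k j :
  (w <= ebasis R k)%MS -> j != k -> w 0 j = 0.
Proof.
by case/submxP => x -> njk; rewrite mxE big_ord1 mxE eq_sym (negbTE njk) mulr0.
Qed.

Section RankOneExtension.
Variables (R : rcfType) (n : nat) (cst : 'I_n -> 'I_n -> 'I_n -> R) (D : 'M[R]_n).
Local Notation vec := 'rV[R]_(1 + n).

(* The semidirect product [R A ⋉ n] with [ad A = D] on [n]: [row_mx a u] stands for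
   [a A + u], so the index [lshift n 0] is [A] and [rshift 1 j] is the [j]-th basis
   vector of [n]. *)
Definition ext_br (x y : vec) : vec :=
  row_mx 0 (lsubmx x 0 0 *: (rsubmx y *m D) - lsubmx y 0 0 *: (rsubmx x *m D)
            + br cst (rsubmx x) (rsubmx y)).

Definition ext_cst (i j k : 'I_(1 + n)) : R := ext_br (ebasis R i) (ebasis R j) 0 k.

Lemma br_ext (x y : vec) : br ext_cst x y = ext_br x y.
Proof.
apply: br_bilinear => [x1 x2 z|a x1 z|z y1 y2|a z y1]; rewrite /ext_br.
- rewrite add_row_mx addr0 !linearD /= mulmxDl brDl; congr row_mx; apply/rowP => k.
  by rewrite !mxE; ring.
- rewrite scale_row_mx scaler0 !linearZ /= -scalemxAl brZl; congr row_mx; apply/rowP => k.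
  by rewrite !mxE; ring.
- rewrite add_row_mx addr0 !linearD /= mulmxDl brDr; congr row_mx; apply/rowP => k.
  by rewrite !mxE; ring.
- rewrite scale_row_mx scaler0 !linearZ /= -scalemxAl brZr; congr row_mx; apply/rowP => k.
  by rewrite !mxE; ring.
Qed.

Lemma ext_br_row_mx0l (u : 'rV[R]_n) (z : vec) :
  ext_br (row_mx 0 u) z = row_mx 0 (- (lsubmx z 0 0 *: (u *m D)) + br cst u (rsubmx z)).
Proof. by rewrite /ext_br row_mxKl row_mxKr mxE scale0r sub0r. Qed.

Lemma ext_br_row_mx0 (u v : 'rV[R]_n) :
  ext_br (row_mx 0 u) (row_mx 0 v) = row_mx 0 (br cst u v).
Proof. by rewrite ext_br_row_mx0l row_mxKl row_mxKr mxE scale0r oppr0 add0r. Qed.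

Lemma ext_cst_lshift i j (k : 'I_1) : ext_cst i j (lshift n k) = 0.
Proof. by rewrite /ext_cst /ext_br row_mxEl mxE. Qed.

Lemma ext_cst_ll (i j : 'I_1) k : ext_cst (lshift n i) (lshift n j) k = 0.
Proof.
rewrite /ext_cst /ext_br !ebasis_lshift !row_mxKr !mul0mx !scaler0 subrr br0l.
by rewrite addr0 row_mx0 mxE.
Qed.

Lemma ext_cst_lr (i : 'I_1) j k : ext_cst (lshift n i) (rshift 1 j) (rshift 1 k) = D j k.
Proof.
rewrite /ext_cst /ext_br ebasis_lshift ebasis_rshift !row_mxKl !row_mxKr row_mxEr.
by rewrite mul0mx scaler0 subr0 br0l addr0 -rowE (ord1 i) !mxE /= mul1r.
Qed.

Lemma ext_cst_rl i (j : 'I_1) k : ext_cst (rshift 1 i) (lshift n j) (rshift 1 k) = - D i k.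
Proof.
rewrite /ext_cst /ext_br ebasis_lshift ebasis_rshift !row_mxKl !row_mxKr row_mxEr.
by rewrite mul0mx scaler0 add0r br0r addr0 -rowE (ord1 j) !mxE /= mul1r.
Qed.

Lemma ext_cst_rr i j k :
  ext_cst (rshift 1 i) (rshift 1 j) (rshift 1 k) = cst i j k.
Proof.
by rewrite /ext_cst ebasis_rshift ebasis_rshift ext_br_row_mx0 row_mxEr br_ebasis mxE.
Qed.

Lemma ext_br_generator (w : 'rV[R]_n) :
  ext_br (row_mx 1%:M 0) (row_mx 0 w) = row_mx 0 (w *m D).
Proof.
rewrite /ext_br !row_mxKl !row_mxKr !mxE eqxx mulr1n scale1r.
by rewrite mul0mx scaler0 subr0 br0l addr0.
Qed.

Hypotheses (cst_lie : is_lie cst) (D_der : derivation cst D).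

Lemma ext_lie : is_lie ext_cst.
Proof.
have [br_anti br_jacobi] := cst_lie.
split=> [x y | x y z]; rewrite !br_ext.
  rewrite /ext_br opp_row_mx oppr0 (br_anti (rsubmx y)); congr row_mx.
  by apply/rowP => k; rewrite !mxE; ring.
rewrite [ext_br x y]/ext_br [ext_br y z]/ext_br [ext_br z x]/ext_br.
rewrite !ext_br_row_mx0l !add_row_mx !addr0 -row_mx0; congr row_mx.
move: (lsubmx x 0 0) (lsubmx y 0 0) (lsubmx z 0 0) (rsubmx x) (rsubmx y) (rsubmx z).
move=> a b c u v w.
rewrite !(mulmxDl, mulNmx) -!scalemxAl !(brDl, brNl, brZl) !D_der.
rewrite (br_anti u (v *m D)) (br_anti v (w *m D)) (br_anti w (u *m D)).
have -> : br cst (br cst u v) w = - (br cst (br cst v w) u + br cst (br cst w u) v).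
  by apply/eqP; rewrite -addr_eq0 addrA br_jacobi.
by apply/rowP => k; rewrite !mxE; ring.
Qed.

Lemma ext_derived : D \in unitmx ->
  (derived_sub ext_cst 1%:M == row_mx (0 : 'M[R]_(n, 1)) 1%:M)%MS.
Proof.
move=> D_unit; apply/andP; split.
  apply: (derived_sub_sub (P := 1%:M)) => // u v _ _.
  by rewrite br_ext row_mx0_sub ?submx1.
apply/row_subP => i; rewrite row_row_mx row0 row1.
rewrite -[delta_mx 0 i](mulmxKV D_unit) -ext_br_generator -br_ext.
exact: br_sub_derived.
Qed.

End RankOneExtension.

Lemma metric_solv_ext_rank_one (R : rcfType) n (cst : 'I_n -> 'I_n -> 'I_n -> R)
    (D : 'M[R]_n) (r : 'rV[R]_1) (s : 'rV[R]_n) :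
    is_lie cst -> derivation cst D -> D \in unitmx -> solvable_lie (ext_cst cst D) ->
    (forall i, row_mx r s 0 i ^+ 2 = 1) ->
  metric_solv_ext cst (diag_mx s) (ext_cst cst D) (diag_mx (row_mx r s)).
Proof.
move=> cst_lie D_der D_unit ext_solv rs_sign.
have r_nz i : r 0 i != 0.
  apply/eqP => r0; move: (rs_sign (lshift n i)).
  by rewrite row_mxEl r0 expr2 mulr0 => /eqP; rewrite eq_sym oner_eq0.
split; first exact: ext_lie.
split; first exact: pseudo_metric_diag_sign.
split; first exact: ext_solv.
split; first by move=> u v; rewrite br_ext ext_br_row_mx0.
split.
  move=> u v; rewrite ip_diag_row_mx [X in X + _]ip_diag big1 ?add0r // => i _.
  by rewrite mxE !mul0r.
split; first exact: ext_derived.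
by move=> v; apply: ip_diag_row_mx_perp.
Qed.


Definition row3 (R : rcfType) (a b c : R) : 'rV[R]_3 := \row_(i < 3) [:: a; b; c]`_i.

Lemma diag3E (R : rcfType) (a b c : R) : diag3 a b c = diag_mx (row3 a b c).
Proof.
apply/matrixP => i j; rewrite !mxE.
by case: i j => [[|[|[|?]]] ?] [[|[|[|?]]] ?].
Qed.

Lemma sum_ord3 (R : rcfType) (F : 'I_3 -> R) :
  \sum_(i < 3) F i = F (@Ordinal 3 0 isT) + F (@Ordinal 3 1 isT) + F (@Ordinal 3 2 isT).
Proof.
rewrite !big_ord_recr big_ord0 /= add0r.
by congr (F _ + F _ + F _); apply: val_inj.
Qed.

Section Heisenberg.
Variable R : rcfType.
Local Notation F1 := (@Ordinal 3 0 isT).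
Local Notation F2 := (@Ordinal 3 1 isT).
Local Notation F3 := (@Ordinal 3 2 isT).

Lemma h3_br (u v : 'rV[R]_3) :
  br (@h3 R) u v = (u 0 F2 * v 0 F3 - u 0 F3 * v 0 F2) *: ebasis R F1.
Proof.
apply/rowP => k; rewrite brE !sum_ord3 !mxE.
by case: k => [[|[|[|?]]] ?] //=; rewrite /h3 /=; ring.
Qed.

Lemma h3_br_centerr (u v : 'rV[R]_3) : (v <= ebasis R F1)%MS -> br (@h3 R) u v = 0.
Proof.
move=> v_center; rewrite h3_br !(sub_ebasis_eq0 v_center) //.
by rewrite !mulr0 subrr scale0r.
Qed.

Lemma h3_br_centerl (u v : 'rV[R]_3) : (u <= ebasis R F1)%MS -> br (@h3 R) u v = 0.
Proof.
move=> u_center; rewrite h3_br !(sub_ebasis_eq0 u_center) //.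
by rewrite !mul0r subrr scale0r.
Qed.

Lemma h3_br_sub_center (u v : 'rV[R]_3) : (br (@h3 R) u v <= ebasis R F1)%MS.
Proof. by rewrite h3_br scalemx_sub. Qed.

Lemma h3_lie : is_lie (@h3 R).
Proof.
split=> [u v | u v w]; first by rewrite !h3_br -scaleNr; congr (_ *: _); ring.
by rewrite !(h3_br_centerl _ (h3_br_sub_center _ _)) !addr0.
Qed.

Lemma h3_nilpotent : nilpotent_lie (@h3 R).
Proof.
exists 2%N; apply/eqP; rewrite mxrank_eq0 -submx0 /=.
apply: (lcs_step_sub (P := ebasis R F1)) => [|u v /h3_br_centerr ->]; last first.
  exact: sub0mx.
by apply: (lcs_step_sub (P := 1%:M)) => // u v _; apply: h3_br_sub_center.
Qed.

Lemma h3_derivation (a b c : R) : a = b + c -> derivation (@h3 R) (diag_mx (row3 a b c)).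
Proof.
move=> -> u v; rewrite !h3_br !mul_mx_diag; apply/rowP => k; rewrite !mxE.
by case: k => [[|[|[|?]]] ?] //=; ring.
Qed.

Lemma row3_sign (a b c : R) : a ^+ 2 = 1 -> b ^+ 2 = 1 -> c ^+ 2 = 1 ->
  forall i, row3 a b c 0 i ^+ 2 = 1.
Proof. by move=> ? ? ?; case=> [[|[|[|?]]] ?]; rewrite mxE. Qed.

Definition g12_signs (s : 'rV[R]_3) : Prop := s = row3 1 1 (-1) \/ s = row3 (-1) 1 1.

Lemma g12_signs_sign (s : 'rV[R]_3) : g12_signs s -> forall i, s 0 i ^+ 2 = 1.
Proof. by case=> ->; apply: row3_sign; rewrite ?sqrrN expr1n. Qed.

Lemma h3_ricop (s : 'rV[R]_3) : g12_signs s ->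
  ricop (@h3 R) (diag_mx s) = (3%:R / 2%:R)%:M + diag_mx (row3 (-2%:R) (-1) (-1)).
Proof.
move=> s_g12; have s_sign := g12_signs_sign s_g12.
apply/matrixP => i j; rewrite ricop_diag // RicM_diag // !sum_ord3.
case: s_g12 => ->; rewrite !mxE /christoffel !mxE.
all: by case: i j => [[|[|[|?]]] ?] [[|[|[|?]]] ?] //=; rewrite /h3 /=; field.
Qed.

Lemma h3_nilsoliton (s : 'rV[R]_3) : g12_signs s -> nilsoliton (@h3 R) (diag_mx s).
Proof.
move=> s_g12; split; first exact: h3_lie.
split; first exact/pseudo_metric_diag_sign/g12_signs_sign.
split; first exact: h3_nilpotent.
exists (3%:R / 2%:R), (diag_mx (row3 (-2%:R) (-1) (-1))); split; last exact: h3_ricop.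
by apply: h3_derivation; rewrite -opprD.
Qed.

End Heisenberg.

Lemma sum_ord4 (R : rcfType) (F : 'I_4 -> R) :
  \sum_(i < 4) F i = F (@Ordinal 4 0 isT) + F (@Ordinal 4 1 isT)
     + F (@Ordinal 4 2 isT) + F (@Ordinal 4 3 isT).
Proof.
rewrite !big_ord_recr big_ord0 /= add0r.
by congr (F _ + F _ + F _ + F _); apply: val_inj.
Qed.

Section HeisenbergExtension.
Variable R : rcfType.
Local Notation F1 := (@Ordinal 3 0 isT).
Local Notation F2 := (@Ordinal 3 1 isT).
Local Notation F3 := (@Ordinal 3 2 isT).

(* [ad A] on [h3]: [-1/2] times the soliton derivation [diag(-2, -1, -1)]. *)
Definition sol_der : 'M[R]_3 := diag_mx (row3 1 2^-1 2^-1).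

Definition sol_cst : 'I_(1 + 3) -> 'I_(1 + 3) -> 'I_(1 + 3) -> R :=
  ext_cst (@h3 R) sol_der.

Lemma sol_der_derivation : derivation (@h3 R) sol_der.
Proof. by apply: h3_derivation; field. Qed.

Lemma sol_der_unit : sol_der \in unitmx.
Proof.
rewrite unitmxE det_diag unitfE prodf_seq_neq0; apply/allP => i _ /=.
by case: i => [[|[|[|?]]] ?]; rewrite mxE /= ?oner_eq0 ?invr_eq0 ?pnatr_eq0.
Qed.

Lemma sol_solvable : solvable_lie sol_cst.
Proof.
exists 3%N; apply/eqP; rewrite mxrank_eq0 -submx0 /=.
apply: (derived_sub_sub (P := row_mx (0 : 'M_(1, 1)) (ebasis R F1))).
  apply: (derived_sub_sub (P := row_mx (0 : 'M_(3, 1)) 1%:M)).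
    apply: (derived_sub_sub (P := 1%:M)) => // u v _ _.
    by rewrite br_ext row_mx0_sub ?submx1.
  move=> u v /sub_row_mx0 [u' _ ->] /sub_row_mx0 [v' _ ->].
  by rewrite br_ext ext_br_row_mx0 row_mx0_sub ?h3_br_sub_center.
move=> u v /sub_row_mx0 [u' u_center ->] /sub_row_mx0 [v' v_center ->].
by rewrite br_ext ext_br_row_mx0 h3_br_centerr // row_mx0 sub0mx.
Qed.

Definition sol_signs (s : 'rV[R]_3) : 'rV[R]_(1 + 3) := row_mx (const_mx (-1)) s.

Lemma sol_signs_sign s : g12_signs s -> forall i, sol_signs s 0 i ^+ 2 = 1.
Proof.
move=> s_g12 i; case: (split_ordP i) => i' ->; last by rewrite row_mxEr g12_signs_sign.
by rewrite row_mxEl mxE sqrrN expr1n.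
Qed.

Lemma sol_metric_solv_ext s : g12_signs s ->
  metric_solv_ext (@h3 R) (diag_mx s) sol_cst (diag_mx (sol_signs s)).
Proof.
move=> s_g12; apply: metric_solv_ext_rank_one.
- exact: h3_lie.
- exact: sol_der_derivation.
- exact: sol_der_unit.
- exact: sol_solvable.
- exact: sol_signs_sign.
Qed.

Definition sol_table (i j k : 'I_(1 + 3)) : R :=
  match nat_of_ord i, nat_of_ord j, nat_of_ord k with
  | 0, 1, 1 => 1 | 1, 0, 1 => -1
  | 0, 2, 2 => 2^-1 | 2, 0, 2 => - 2^-1
  | 0, 3, 3 => 2^-1 | 3, 0, 3 => - 2^-1
  | 2, 3, 1 => 1 | 3, 2, 1 => -1
  | _, _, _ => 0
  end.

Lemma sol_cstE i j k : sol_cst i j k = sol_table i j k.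
Proof.
rewrite /sol_cst.
case: (split_ordP i) => i' ->; [rewrite (ord1 i') | case: i' => [[|[|[|?]]] ?] //];
  (case: (split_ordP j) => j' ->; [rewrite (ord1 j') | case: j' => [[|[|[|?]]] ?] //]);
  (case: (split_ordP k) => k' ->; [rewrite (ord1 k') | case: k' => [[|[|[|?]]] ?] //]).
all: rewrite ?ext_cst_lshift ?ext_cst_ll ?ext_cst_lr ?ext_cst_rl ?ext_cst_rr ?mxE;
  by rewrite /sol_table /= ?add1n /= ?mxE ?oppr0.
Qed.

Lemma sol_signsE s k : sol_signs s 0 k = [:: -1; s 0 F1; s 0 F2; s 0 F3]`_k.
Proof.
case: (split_ordP k) => k' ->; first by rewrite row_mxEl mxE (ord1 k').
by rewrite row_mxEr; case: k' => [[|[|[|?]]] ?] //=; congr (s 0 _); apply: val_inj.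
Qed.

Lemma sol_einstein s : g12_signs s -> einstein sol_cst (diag_mx (sol_signs s)).
Proof.
move=> s_g12; exists (3%:R / 2%:R); apply/matrixP => i j.
rewrite RicM_diag; last exact: sol_signs_sign.
rewrite [RHS]mxE mxE.
(* Abstracting [sol_cst] and [sol_signs] keeps the rewrites below from unfolding them. *)
move: (sol_signsE s) sol_cstE; move: (sol_signs s) sol_cst => sg c sgE cE.
rewrite !sum_ord4 /christoffel !cE !sgE.
case: s_g12 => ->; rewrite !mxE.
all: by case: i j => [[|[|[|[|?]]]] ?] [[|[|[|[|?]]]] ?] //=; rewrite /sol_table /=; field.
Qed.

End HeisenbergExtension.

Theorem mainTheorem4 (R : rcfType) :
  nilsoliton (@h3 R) (g1 R) /\ nilsoliton (@h3 R) (g2 R) /\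
  (exists (m : nat) (cs : 'I_(m + 3) -> 'I_(m + 3) -> 'I_(m + 3) -> R)
          (Gs : 'M[R]_(m + 3)),
      metric_solv_ext (@h3 R) (g1 R) cs Gs /\ einstein cs Gs) /\
  (exists (m : nat) (cs : 'I_(m + 3) -> 'I_(m + 3) -> 'I_(m + 3) -> R)
          (Gs : 'M[R]_(m + 3)),
      metric_solv_ext (@h3 R) (g2 R) cs Gs /\ einstein cs Gs).
Proof.
have g1_signs : g12_signs (row3 (1 : R) 1 (-1)) by left.
have g2_signs : g12_signs (row3 (-1 : R) 1 1) by right.
rewrite /g1 /g2 !diag3E; split; [|split; [|split]].
- exact: h3_nilsoliton.
- exact: h3_nilsoliton.
- exists 1%N, (sol_cst R), (diag_mx (sol_signs (row3 1 1 (-1)))).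
  by split; [apply: sol_metric_solv_ext | apply: sol_einstein].
- exists 1%N, (sol_cst R), (diag_mx (sol_signs (row3 (-1) 1 1))).
  by split; [apply: sol_metric_solv_ext | apply: sol_einstein].
Qed.
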